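(* Let $h:\mathcal X\times\mathcal S\to\mathcal Y$ be a measurable classifier with values in a finite set $\mathcal Y\subset\mathbb R$, and suppose $h(X,S)$ satisfies statistical parity, i.e. $h(X,S)$ is independent of $S$. Then there exists a transport-based counterfactual model $\Pi$ such that $h$ is $\Pi$-counterfactually fair.
   Context: $(X,S)$ is a random pair with $X$ valued in $\mathcal X\subseteq\mathbb R^d$ and $S$ valued in a finite set $\mathcal S\subset\mathbb R$ with $\mathbb P(S=s)>0$ for all $s$; $\mu_s:=\mathcal L(X\mid S=s)$. $\Pi(P,Q)$ denotes the set of probability measures on $\mathbb R^d\times\mathbb R^d$ with marginals $P$ and $Q$; $t(x,x'):=(x',x)$; $I$ is the identity and $(I\times I)(x)=(x,x)$; $T_\sharp P:=P\circ T^{-1}$. A transport-based counterfactual model is a collection $\Pi=\{\pi_{\langle s'|s\rangle}\}_{s,s'\in\mathcal S}$ of probability measures on $\mathbb R^d\times\mathbb R^d$ such that for all $s,s'$: (i) $\pi_{\langle s'|s\rangle}\in\Pi(\mu_s,\mu_{s'})$; (ii) $\pi_{\langle s|s\rangle}=(I\times I)_\sharp\mu_s$; (iii) $\pi_{\langle s|s'\rangle}=t_\sharp\pi_{\langle s'|s\rangle}$. A predictor $h$ is $\Pi$-counterfactually fair if for every $s,s'\in\mathcal S$ and $\pi_{\langle s'|s\rangle}$-almost every $(x,x')$, $h(x,s)=h(x',s')$. *)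

From HB Require Import structures.
From mathcomp Require Import all_boot all_order all_algebra.
From mathcomp Require Import all_classical all_reals all_analysis.
Set Implicit Arguments. Unset Strict Implicit. Unset Printing Implicit Defensive.
Import Order.TTheory GRing.Theory Num.Theory.
Local Open Scope classical_set_scope.
Local Open Scope ring_scope.

(* R^d is represented by d.-tuple R, with the product (= Borel) sigma-algebra. *)

Definition indep_rv (R : realType) (dO : measure_display) (Omega : measurableType dO)
  (P : probability Omega R) (U V : Omega -> R) : Prop :=
  forall A B : set R, measurable A -> measurable B ->
    P (U @^-1` A `&` V @^-1` B) = (P (U @^-1` A) * P (V @^-1` B))%E.

Definition cond_law (R : realType) (dO : measure_display) (Omega : measurableType dO)
  (P : probability Omega R) (d : nat) (X : Omega -> d.-tuple R) (S : Omega -> R)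
  (s : R) : set (d.-tuple R) -> \bar R :=
  fun A => (P (X @^-1` A `&` S @^-1` [set s]) * ((fine (P (S @^-1` [set s])))^-1)%:E)%E.

Definition is_coupling (R : realType) (d : nat)
  (pi : probability (d.-tuple R * d.-tuple R)%type R)
  (mu nu : set (d.-tuple R) -> \bar R) : Prop :=
  (forall A : set (d.-tuple R), measurable A -> pushforward pi fst A = mu A) /\
  (forall A : set (d.-tuple R), measurable A -> pushforward pi snd A = nu A).

(* Transport-based counterfactual model, indexed by (s', s) as pi_<s'|s> = Pi s' s. *)
Definition transport_cf_model (R : realType) (dO : measure_display)
  (Omega : measurableType dO) (P : probability Omega R) (d : nat)
  (X : Omega -> d.-tuple R) (S : Omega -> R) (Sset : seq R)
  (Pi : R -> R -> probability (d.-tuple R * d.-tuple R)%type R) : Prop :=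
  forall s s', s \in Sset -> s' \in Sset ->
    [/\ is_coupling (Pi s' s) (cond_law P X S s) (cond_law P X S s'),
        (forall A, measurable A ->
           Pi s s A = pushforward (cond_law P X S s) (fun x => (x, x)) A) &
        (forall A, measurable A ->
           Pi s s' A = pushforward (Pi s' s) (fun z => (z.2, z.1)) A)].

Definition cf_fair (R : realType) (d : nat) (Sset : seq R)
  (Pi : R -> R -> probability (d.-tuple R * d.-tuple R)%type R)
  (h : d.-tuple R -> R -> R) : Prop :=
  forall s s', s \in Sset -> s' \in Sset ->
    {ae (Pi s' s), forall z : (d.-tuple R * d.-tuple R)%type, h z.1 s = h z.2 s'}.

From HB Require Import structures.
From mathcomp Require Import all_boot all_order all_algebra.
From mathcomp Require Import all_classical all_reals all_analysis.
From mathcomp Require Import ring.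
Set Implicit Arguments. Unset Strict Implicit. Unset Printing Implicit Defensive.
Import Order.TTheory GRing.Theory Num.Theory.
Local Open Scope classical_set_scope.
Local Open Scope ring_scope.

(* Write Z := h(X, S) for the prediction. Statistical parity makes the law of Z
   the same under every conditioning S = s, so the law mu_s of X given S = s
   disintegrates as mu_s = \sum_y P(Z = y) mu_(s,y), where mu_(s,y) is the law of
   X given (S, Z) = (s, y), with weights that do not depend on s. Coupling
   mu_(s,y) and mu_(s',y) independently and mixing with these weights gives a
   coupling of mu_s and mu_(s') which is symmetric in (s, s') and only pairs
   points x, x' with h(x, s) = y = h(x', s'). For s' = s the diagonal coupling is
   used instead. *)

Section conditional_probability.
Context d (T : measurableType d) (R : realType) (P : probability T R).
Local Open Scope ereal_scope.

(* If [P D = 0], [mnormalize] falls back to [P] itself. *)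
Definition cond_prob (D : set T) (mD : measurable D) : probability T R :=
  mnormalize (mrestr P mD) P.

Lemma cond_probE D (mD : measurable D) A :
  P D != 0 -> cond_prob mD A = P (A `&` D) * (fine (P D))^-1%:E.
Proof.
move=> PD0; have PDoo : P D != +oo by case/fin_numP: (fin_num_measure P D mD).
rewrite /cond_prob/=; unfold mnormalize; cbn; rewrite setTI.
by case: ifPn => // /orP[/eqP PD|/eqP PDoo']; [rewrite PD eqxx in PD0|rewrite PDoo' in PDoo].
Qed.

Lemma cond_prob_eq1 D (mD : measurable D) A :
  D `<=` A -> P D != 0 -> cond_prob mD A = 1.
Proof.
move=> DA PD0; have PDfin := fin_num_measure P D mD.
by rewrite cond_probE// (setIidr DA) -[P D](fineK PDfin) -EFinM divff// fine_eq0.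
Qed.

Lemma cond_prob_eq0 D (mD : measurable D) A :
  A `&` D = set0 -> P D != 0 -> cond_prob mD A = 0.
Proof. by move=> AD0 PD0; rewrite cond_probE// AD0 measure0 mul0e. Qed.

End conditional_probability.

Lemma measurable_preimage d d' (T : measurableType d) (T' : measurableType d')
  (f : T -> T') (A : set T') :
  measurable_fun setT f -> measurable A -> measurable (f @^-1` A).
Proof. by move=> mf mA; rewrite -[_ @^-1` _]setTI; exact: mf. Qed.

Lemma measure_preimage_partition d (T : measurableType d) (R : realType)
  (I : choiceType) (mu : {measure set T -> \bar R}) (f : T -> I) (ys : seq I)
  (B : set T) :
  uniq ys -> measurable B -> (forall y, measurable (f @^-1` [set y])) ->
  (forall w, B w -> f w \in ys) ->
  mu B = (\sum_(y <- ys) mu (B `&` f @^-1` [set y]))%E.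
Proof.
move=> ys_uniq mB mf Bys; rewrite fsbig_seq//.
have {1}-> : B = \bigcup_(y in [set` ys]) (B `&` f @^-1` [set y]).
  apply/seteqP; split=> [w Bw|w [y _ []//]].
  by exists (f w); [exact: Bys|split].
apply: measure_fin_bigcup; first exact: finite_seq.
- by move=> y y' _ _ [w [[_ <-] [_ <-]]].
- by move=> y _; exact: measurableI.
Qed.

Definition image_prob d d' (T : measurableType d) (T' : measurableType d')
  (R : realType) (Q : probability T R) (f : T -> T')
  (mf : measurable_fun setT f) : probability T' R :=
  distribution Q (mfun_Sub (mem_set mf)).

Lemma image_probE d d' (T : measurableType d) (T' : measurableType d')
  (R : realType) (Q : probability T R) (f : T -> T')
  (mf : measurable_fun setT f) A : image_prob Q mf A = Q (f @^-1` A).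
Proof. by []. Qed.

Lemma mnormalize_mass1 d (T : measurableType d) (R : realType)
  (mu : {measure set T -> \bar R}) (P : probability T R) A :
  mu setT = 1%E -> mnormalize mu P A = mu A.
Proof. by move=> mu1; rewrite /mnormalize mu1 onee_eq0 /= invr1 mule1. Qed.

Section mixture.
Context d (T : measurableType d) (R : realType) (I : Type) (i0 : I).
Variables (ys : seq I) (w : I -> {nonneg R}) (mu : I -> probability T R).
Local Open Scope ereal_scope.

Let msum_ys := msum (fun k => mscale (w (nth i0 ys k)) (mu (nth i0 ys k))) (size ys).

Definition mixture : probability T R := mnormalize msum_ys point.

Hypothesis sum_w1 : \sum_(y <- ys) (w y)%:num%:E = 1.

Lemma mixtureE A : mixture A = \sum_(y <- ys) (w y)%:num%:E * mu y A.
Proof.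
have msum_ysE B : msum_ys B = \sum_(y <- ys) (w y)%:num%:E * mu y B.
  by rewrite /msum_ys /msum (big_nth i0) big_mkord.
have msum_ys1 : msum_ys setT = 1.
  by rewrite msum_ysE -sum_w1; apply: eq_bigr => y _; rewrite probability_setT mule1.
by rewrite -msum_ysE; exact: mnormalize_mass1.
Qed.

End mixture.

Section product_probability.
Context d1 d2 (T1 : measurableType d1) (T2 : measurableType d2) (R : realType).
Variables (mu : probability T1 R) (nu : probability T2 R).
Local Open Scope ereal_scope.

Lemma product_setXT A : measurable A -> (mu \x nu) (A `*` setT) = mu A.
Proof. by move=> mA; rewrite product_measure1E// -[RHS]mule1 -(probability_setT nu). Qed.

Lemma product_setTX B : measurable B -> (mu \x nu) (setT `*` B) = nu B.
Proof. by move=> mB; rewrite product_measure1E// -[RHS]mul1e -(probability_setT mu). Qed.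

Lemma product_swap A :
  measurable A -> (nu \x mu) A = (mu \x nu) (unstable.swap @^-1` A).
Proof.
move=> mA; rewrite -(image_probE (mu \x nu) (@measurable_swap _ _ T1 T2)).
apply: product_measure_unique => // B C mB mC.
have swapBC : unstable.swap @^-1` (B `*` C) = C `*` B.
  by apply/seteqP; split=> -[x y] [].
by rewrite [LHS]/= /pushforward swapBC product_measure1E// muleC.
Qed.

Lemma product_setCX0 A B : measurable A -> measurable B ->
  mu A = 1 -> nu B = 1 -> (mu \x nu) (~` (A `*` B)) = 0.
Proof.
move=> mA mB muA nuB.
have muxnuAB : (mu \x nu) (A `*` B) = 1.
  apply: (etrans (product_measure1E _ _ mA mB)).
  by apply: (etrans (congr2 *%E muA nuB)); rewrite mule1.
apply: (etrans (probability_setC _ (measurableX mA mB))).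
by apply: (etrans (congr1 (fun x => 1 - x) muxnuAB)); rewrite subee.
Qed.

End product_probability.

Section counterfactual_model.
Variables (R : realType) (dO : measure_display) (Omega : measurableType dO).
Variables (P : probability Omega R) (d : nat).
Variables (Xset : set (d.-tuple R)) (Sset Yset : seq R).
Variables (X : Omega -> d.-tuple R) (S : Omega -> R) (h : d.-tuple R -> R -> R).
Hypotheses (mXset : measurable Xset).
Hypotheses (mX : measurable_fun setT X) (mS : measurable_fun setT S).
Hypotheses (XsetX : forall w, Xset (X w)) (SsetS : forall w, S w \in Sset).
Hypothesis PS_gt0 : forall s, s \in Sset -> (0 < P (S @^-1` [set s]))%E.
Hypothesis mh : measurable_fun (Xset `*` [set s | s \in Sset]) (fun z => h z.1 z.2).
Hypothesis hY : forall x s, Xset x -> s \in Sset -> h x s \in Yset.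
Hypothesis parity : indep_rv P (fun w => h (X w) (S w)) S.

Local Open Scope ereal_scope.

Definition prediction w := h (X w) (S w).

Let ys := undup Yset.

Lemma prediction_in_ys w : prediction w \in ys.
Proof. by rewrite mem_undup; apply: hY. Qed.

Lemma measurable_Sset : measurable [set s | s \in Sset].
Proof.
apply: countable_measurable; first exact: measurable_set1.
exact/finite_set_countable/finite_seq.
Qed.

Lemma measurable_prediction : measurable_fun setT prediction.
Proof.
apply: (measurable_comp (measurableX mXset measurable_Sset) _ mh
  (g := fun w => (X w, S w))).
- by move=> _ [w _ <-]; split; [exact: XsetX|exact: SsetS].
- exact: measurable_fun_pair.
Qed.

Lemma measurable_S_eq s : measurable (S @^-1` [set s]).
Proof. exact: measurable_preimage. Qed.

Lemma measurable_prediction_eq y : measurable (prediction @^-1` [set y]).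
Proof. exact: measurable_preimage measurable_prediction (measurable_set1 y). Qed.

Lemma measurable_S_prediction_eq s y :
  measurable (S @^-1` [set s] `&` prediction @^-1` [set y]).
Proof. exact: measurableI (measurable_S_eq s) (measurable_prediction_eq y). Qed.

Lemma P_S_prediction_eq s y :
  P (S @^-1` [set s] `&` prediction @^-1` [set y]) =
  P (prediction @^-1` [set y]) * P (S @^-1` [set s]).
Proof. by rewrite setIC; exact: parity. Qed.

Definition prediction_weight y : {nonneg R} :=
  NngNum (fine_ge0 (measure_ge0 P (prediction @^-1` [set y]))).

Lemma prediction_weightE y :
  (prediction_weight y)%:num%:E = P (prediction @^-1` [set y]).
Proof. by rewrite fineK// fin_num_measure//; exact: measurable_prediction_eq. Qed.

Lemma sum_prediction_weight : \sum_(y <- ys) (prediction_weight y)%:num%:E = 1.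
Proof.
rewrite -(probability_setT P) (measure_preimage_partition P (f:=prediction) (undup_uniq Yset))//.
- by apply: eq_bigr => y _; rewrite setTI prediction_weightE.
- exact: measurable_prediction_eq.
- by move=> w _; exact: prediction_in_ys.
Qed.

Definition law_given s y : probability (d.-tuple R) R :=
  image_prob (cond_prob P (measurable_S_prediction_eq s y)) mX.

(* Components with [P (Z = y) = 0] carry junk laws but zero weight. *)
Definition coupling s' s : probability (d.-tuple R * d.-tuple R)%type R :=
  mixture 0%R ys prediction_weight (fun y => law_given s y \x law_given s' y).

Definition diagonal_law s : probability (d.-tuple R * d.-tuple R)%type R :=
  image_prob (cond_prob P (measurable_S_eq s)) (measurable_fun_pair mX mX).

Definition cf_model s' s := if s' == s then diagonal_law s else coupling s' s.

Lemma P_S_eq_neq0 s : s \in Sset -> P (S @^-1` [set s]) != 0.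
Proof. by move=> sS; rewrite gt_eqF ?PS_gt0. Qed.

Lemma cond_lawE s A : s \in Sset ->
  cond_law P X S s A = cond_prob P (measurable_S_eq s) (X @^-1` A).
Proof. by move=> sS; rewrite cond_probE ?P_S_eq_neq0. Qed.

Lemma law_given_weighted s y A : s \in Sset -> measurable A ->
  (prediction_weight y)%:num%:E * law_given s y A =
  P (X @^-1` A `&` S @^-1` [set s] `&` prediction @^-1` [set y]) *
  (fine (P (S @^-1` [set s])))^-1%:E.
Proof.
move=> sS mA; have mXA := measurable_preimage mX mA.
have [w0|w0] := eqVneq (prediction_weight y)%:num 0%R.
  rewrite w0 mul0e (@subset_measure0 _ _ _ P _ (prediction @^-1` [set y])).
  - by rewrite mul0e.
  - exact: measurableI _ _ (measurableI _ _ mXA (measurable_S_eq s)) (measurable_prediction_eq y).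
  - exact: measurable_prediction_eq.
  - by move=> w [].
  - by rewrite -[LHS]prediction_weightE w0.
have lawE : law_given s y A = cond_prob P (measurable_S_prediction_eq s y) (X @^-1` A).
  by [].
have PSfin := fin_num_measure P _ (measurable_S_eq s).
have ps0 : fine (P (S @^-1` [set s])) != 0%R by rewrite fine_eq0 ?P_S_eq_neq0.
have PSYE : P (S @^-1` [set s] `&` prediction @^-1` [set y]) =
    ((prediction_weight y)%:num * fine (P (S @^-1` [set s])))%:E.
  by rewrite P_S_prediction_eq -prediction_weightE EFinM (fineK PSfin).
rewrite lawE cond_probE; last by rewrite PSYE eqe mulf_neq0.
have PAfin := fin_num_measure P _
  (measurableI _ _ (measurableI _ _ mXA (measurable_S_eq s)) (measurable_prediction_eq y)).
rewrite PSYE /= setIA -(fineK PAfin) -!EFinM; congr EFin.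
by field; apply/andP.
Qed.

Lemma cond_law_mixture s A : s \in Sset -> measurable A ->
  cond_law P X S s A =
  \sum_(y <- ys) (prediction_weight y)%:num%:E * law_given s y A.
Proof.
move=> sS mA; have mXS := measurableI _ _ (measurable_preimage mX mA) (measurable_S_eq s).
rewrite /cond_law (measure_preimage_partition P (f:=prediction) (undup_uniq Yset))//.
- rewrite ge0_sume_distrl; last by move=> y _; exact: measure_ge0.
  by apply: eq_bigr => y _; rewrite law_given_weighted.
- exact: measurable_prediction_eq.
- by move=> w _; exact: prediction_in_ys.
Qed.

Lemma P_S_prediction_eq_neq0 s y : s \in Sset ->
  (prediction_weight y)%:num != 0%R ->
  P (S @^-1` [set s] `&` prediction @^-1` [set y]) != 0.
Proof.
move=> sS w0; rewrite P_S_prediction_eq mule_neq0 ?P_S_eq_neq0//.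
by rewrite -[X in X != _]prediction_weightE eqe.
Qed.

Definition level s y := [set x | Xset x /\ h x s = y].

Lemma measurable_level s y : s \in Sset -> measurable (level s y).
Proof.
move=> sS; have mhy := mh (measurableX mXset measurable_Sset) (measurable_set1 y).
rewrite (_ : level s y = pair^~ s @^-1`
    ((Xset `*` [set s | s \in Sset]) `&` (fun z => h z.1 z.2) @^-1` [set y])).
  exact: measurable_preimage (pair2_measurable s) mhy.
by apply/seteqP; split=> x /= [] => [Xx <-|[Xx _] <-].
Qed.

Lemma law_given_level s y : s \in Sset -> (prediction_weight y)%:num != 0%R ->
  law_given s y (level s y) = 1.
Proof.
move=> sS w0; apply: cond_prob_eq1; last exact: P_S_prediction_eq_neq0.
by move=> w [/= Sw <-]; split; [exact: XsetX|rewrite /prediction Sw].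
Qed.

Definition agreement s s' := \bigcup_(y in [set` ys]) (level s y `*` level s' y).

Lemma measurable_agreement s s' :
  s \in Sset -> s' \in Sset -> measurable (agreement s s').
Proof.
move=> sS s'S; apply: fin_bigcup_measurable; first exact: finite_seq.
by move=> y _; apply: measurableX; exact: measurable_level.
Qed.

Lemma agreement_prediction s s' z : agreement s s' z -> h z.1 s = h z.2 s'.
Proof. by move=> [y _ [[_ ->] [_ ->]]]. Qed.

Lemma couplingE s' s A : coupling s' s A =
  \sum_(y <- ys) (prediction_weight y)%:num%:E * (law_given s y \x law_given s' y) A.
Proof. exact: mixtureE sum_prediction_weight A. Qed.

Lemma coupling_disagreement s s' : s \in Sset -> s' \in Sset ->
  coupling s' s (~` agreement s s') = 0.
Proof.
move=> sS s'S; rewrite couplingE big1_seq// => y /andP[_ yys].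
have [w0|w0] := eqVneq (prediction_weight y)%:num 0%R; first by rewrite w0 mul0e.
rewrite (@subset_measure0 _ _ _ _ _ (~` (level s y `*` level s' y))) ?mule0//.
- exact: measurableC (measurable_agreement sS s'S).
- by apply: measurableC; apply: measurableX; exact: measurable_level.
- by move=> z nG Lz; apply: nG; exists y.
- by apply: product_setCX0; solve [exact: measurable_level | exact: law_given_level].
Qed.

Lemma diagonal_lawE s A : diagonal_law s A =
  cond_prob P (measurable_S_eq s) ((fun w => (X w, X w)) @^-1` A).
Proof. by []. Qed.

Lemma diagonal_disagreement s : s \in Sset ->
  diagonal_law s (~` agreement s s) = 0.
Proof.
move=> sS; rewrite diagonal_lawE cond_prob_eq0 ?P_S_eq_neq0//.
apply/seteqP; split=> // w [/= nG Sw]; apply: nG.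
exists (prediction w); first exact: prediction_in_ys.
by rewrite /prediction -Sw; split; split=> //; exact: XsetX.
Qed.

Lemma coupling_is_coupling s s' : s \in Sset -> s' \in Sset ->
  is_coupling (coupling s' s) (cond_law P X S s) (cond_law P X S s').
Proof.
move=> sS s'S; split=> A mA; rewrite /pushforward couplingE cond_law_mixture//;
  apply: eq_bigr => y _.
- by rewrite -setXT product_setXT.
- by rewrite -setTX product_setTX.
Qed.

Lemma coupling_swap s s' A : measurable A ->
  coupling s s' A = coupling s' s (unstable.swap @^-1` A).
Proof. by move=> mA; rewrite !couplingE; apply: eq_bigr => y _; rewrite product_swap. Qed.

Lemma cf_model_transport : transport_cf_model P X S Sset cf_model.
Proof.
move=> s s' sS s'S; split.
- rewrite /cf_model; case: eqVneq => [->|_]; last exact: coupling_is_coupling.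
  by split=> A mA; rewrite /pushforward diagonal_lawE cond_lawE.
- by move=> A mA; rewrite /cf_model eqxx /pushforward cond_lawE.
- move=> A mA; rewrite /cf_model /pushforward.
  by case: eqVneq => [->|_] //; exact: coupling_swap.
Qed.

Lemma cf_model_fair : cf_fair Sset cf_model h.
Proof.
move=> s s' sS s'S; exists (~` agreement s s'); split.
- exact: measurableC (measurable_agreement sS s'S).
- rewrite /cf_model; case: eqVneq => [->|_]; last exact: coupling_disagreement.
  exact: diagonal_disagreement.
- by move=> z /= nh Gz; apply: nh; exact: agreement_prediction.
Qed.

End counterfactual_model.

Theorem proposition8 (R : realType) (dO : measure_display) (Omega : measurableType dO)
  (P : probability Omega R) (d : nat)
  (Xset : set (d.-tuple R)) (Sset Yset : seq R)
  (X : Omega -> d.-tuple R) (S : Omega -> R)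
  (h : d.-tuple R -> R -> R) :
  measurable Xset ->
  measurable_fun setT X -> measurable_fun setT S ->
  (forall w, Xset (X w)) -> (forall w, S w \in Sset) ->
  (forall s, s \in Sset -> (0 < P (S @^-1` [set s]))%E) ->
  measurable_fun (Xset `*` [set s | s \in Sset]) (fun z => h z.1 z.2) ->
  (forall x s, Xset x -> s \in Sset -> h x s \in Yset) ->
  indep_rv P (fun w => h (X w) (S w)) S ->
  exists Pi : R -> R -> probability (d.-tuple R * d.-tuple R)%type R,
    transport_cf_model P X S Sset Pi /\ cf_fair Sset Pi h.
Proof.
move=> mXset mX mS XsetX SsetS PS_gt0 mh hY parity.
exists (cf_model P Yset mXset mX mS XsetX SsetS mh); split.
- exact: cf_model_transport.
- exact: cf_model_fair.
Qed.
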